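(* Let $E$ be a graph, $(G,\le)$ an ordered group, $w:E^1\to G_+$ a function, and $R$ a commutative ring with identity; give $L_R(E)$ the $G$-grading induced by $w$. Suppose $\pi:L_R(E)\to A$ is a homomorphism of $G$-graded $R$-algebras such that $\pi(rv)\ne0$ for all $v\in E^0$ and all nonzero $r\in R$. Then $\pi$ is injective.
   Context: A directed graph $E=(E^0,E^1,r,s)$ with range and source maps $r,s:E^1\to E^0$; a vertex $v$ is regular if $0<|s^{-1}(v)|<\infty$. The Leavitt path algebra $L_R(E)$ is the $R$-algebra generated by $\{v:v\in E^0\}\cup\{e,e^*:e\in E^1\}$ subject to: the vertices are pairwise orthogonal idempotents; $s(e)e=e=er(e)$ and $r(e)e^*=e^*=e^*s(e)$; $e^*f=\delta_{e,f}r(e)$ for $e,f\in E^1$; $v=\sum_{e\in s^{-1}(v)}ee^*$ for every regular vertex $v$. An ordered group is a group with a total order $\le$ such that $g\le h$ implies $fg\le fh$ and $gf\le hf$; $G_+=\{c: \varepsilon\le c,\ c\ne\varepsilon\}$. A map $w:E^1\to G$ induces a $G$-grading on $L_R(E)$ by $\deg v=\varepsilon$, $\deg e=w(e)$, $\deg e^*=w(e)^{-1}$. *)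

From HB Require Import structures.
From mathcomp Require Import all_boot all_order all_algebra.
From Stdlib Require List.
Set Implicit Arguments. Unset Strict Implicit. Unset Printing Implicit Defensive.
Import GRing.Theory.
Local Open Scope ring_scope.

Record ordered_group (G : Type) (op : G -> G -> G) (e : G) (inv : G -> G)
    (le : G -> G -> Prop) : Prop := {
  og_assoc : forall a b c, op a (op b c) = op (op a b) c;
  og_id_l : forall a, op e a = a;
  og_id_r : forall a, op a e = a;
  og_inv_l : forall a, op (inv a) a = e;
  og_inv_r : forall a, op a (inv a) = e;
  og_refl : forall a, le a a;
  og_antisym : forall a b, le a b -> le b a -> a = b;
  og_trans : forall a b c, le a b -> le b c -> le a c;
  og_total : forall a b, le a b \/ le b a;
  og_compat_l : forall f g h, le g h -> le (op f g) (op f h);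
  og_compat_r : forall f g h, le g h -> le (op g f) (op h f) }.

Definition positive_elt (G : Type) (e : G) (le : G -> G -> Prop) (c : G) : Prop :=
  le e c /\ c <> e.

(* Graph E = (V, Ed, rng, src); generators v, e, e^*. *)
Inductive lpa_gen (V Ed : Type) : Type :=
  | GV of V
  | GE of Ed
  | GS of Ed.

Inductive lpa_term (R V Ed : Type) : Type :=
  | TGen of lpa_gen V Ed
  | TZero
  | TAdd of lpa_term R V Ed & lpa_term R V Ed
  | TMul of lpa_term R V Ed & lpa_term R V Ed
  | TScale of R & lpa_term R V Ed.

Arguments TZero {R V Ed}.

Definition tV {R V Ed : Type} (v : V) : lpa_term R V Ed := @TGen R V Ed (@GV V Ed v).
Definition tE {R V Ed : Type} (e : Ed) : lpa_term R V Ed := @TGen R V Ed (@GE V Ed e).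
Definition tS {R V Ed : Type} (e : Ed) : lpa_term R V Ed := @TGen R V Ed (@GS V Ed e).

Definition sum_eestar {R V Ed : Type} (l : seq Ed) : lpa_term R V Ed :=
  foldr (fun e acc => TAdd (TMul (tE e) (tS e)) acc) TZero l.

(* The congruence on terms whose quotient is L_R(E): the smallest congruence
   containing the axioms of an (associative, not necessarily unital) R-algebra
   and the Leavitt path algebra relations. *)
Inductive lpa_eq (R : comPzRingType) (V Ed : Type) (rng src : Ed -> V) :
    lpa_term R V Ed -> lpa_term R V Ed -> Prop :=
  | eq_refl t : lpa_eq rng src t t
  | eq_sym t u : lpa_eq rng src t u -> lpa_eq rng src u t
  | eq_trans t u w : lpa_eq rng src t u -> lpa_eq rng src u w -> lpa_eq rng src t w
  | eq_add t t' u u' : lpa_eq rng src t t' -> lpa_eq rng src u u' ->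
      lpa_eq rng src (TAdd t u) (TAdd t' u')
  | eq_mul t t' u u' : lpa_eq rng src t t' -> lpa_eq rng src u u' ->
      lpa_eq rng src (TMul t u) (TMul t' u')
  | eq_scale (a : R) t t' : lpa_eq rng src t t' ->
      lpa_eq rng src (TScale a t) (TScale a t')
  | eq_addA t u w : lpa_eq rng src (TAdd t (TAdd u w)) (TAdd (TAdd t u) w)
  | eq_addC t u : lpa_eq rng src (TAdd t u) (TAdd u t)
  | eq_add0 t : lpa_eq rng src (TAdd TZero t) t
  | eq_addN t : lpa_eq rng src (TAdd t (TScale (-1) t)) TZero
  | eq_scale1 t : lpa_eq rng src (TScale 1 t) t
  | eq_scaleA (a b : R) t : lpa_eq rng src (TScale a (TScale b t)) (TScale (a * b) t)
  | eq_scaleDl (a b : R) t :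
      lpa_eq rng src (TScale (a + b) t) (TAdd (TScale a t) (TScale b t))
  | eq_scaleDr (a : R) t u :
      lpa_eq rng src (TScale a (TAdd t u)) (TAdd (TScale a t) (TScale a u))
  | eq_mulA t u w : lpa_eq rng src (TMul t (TMul u w)) (TMul (TMul t u) w)
  | eq_mulDl t u w : lpa_eq rng src (TMul (TAdd t u) w) (TAdd (TMul t w) (TMul u w))
  | eq_mulDr t u w : lpa_eq rng src (TMul t (TAdd u w)) (TAdd (TMul t u) (TMul t w))
  | eq_scale_mull (a : R) t u :
      lpa_eq rng src (TMul (TScale a t) u) (TScale a (TMul t u))
  | eq_scale_mulr (a : R) t u :
      lpa_eq rng src (TMul t (TScale a u)) (TScale a (TMul t u))
  | eq_vv v : lpa_eq rng src (TMul (tV v) (tV v)) (tV v)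
  | eq_vw v w : v <> w -> lpa_eq rng src (TMul (tV v) (tV w)) TZero
  | eq_se e : lpa_eq rng src (TMul (tV (src e)) (tE e)) (tE e)
  | eq_er e : lpa_eq rng src (TMul (tE e) (tV (rng e))) (tE e)
  | eq_rs e : lpa_eq rng src (TMul (tV (rng e)) (tS e)) (tS e)
  | eq_ss e : lpa_eq rng src (TMul (tS e) (tV (src e))) (tS e)
  | eq_CK1 e : lpa_eq rng src (TMul (tS e) (tE e)) (tV (rng e))
  | eq_CK1' e f : e <> f -> lpa_eq rng src (TMul (tS e) (tE f)) TZero
  (* CK2: for a regular vertex v, with l an enumeration (without repetition)
     of the finite nonempty set s^{-1}(v) *)
  | eq_CK2 v (l : seq Ed) :
      (forall e, src e = v <-> List.In e l) -> List.NoDup l -> l <> [::] ->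
      lpa_eq rng src (tV v) (sum_eestar l).

(* The component L_g is the set
   of classes of terms t with lpa_homog g t (the span of monomials of degree g). *)
Inductive lpa_homog (R : Type) (V Ed G : Type) (op : G -> G -> G) (eps : G)
    (inv : G -> G) (w : Ed -> G) : G -> lpa_term R V Ed -> Prop :=
  | hom_v v : lpa_homog op eps inv w eps (tV v)
  | hom_e e : lpa_homog op eps inv w (w e) (tE e)
  | hom_s e : lpa_homog op eps inv w (inv (w e)) (tS e)
  | hom_zero g : lpa_homog op eps inv w g TZero
  | hom_add g t u : lpa_homog op eps inv w g t -> lpa_homog op eps inv w g u ->
      lpa_homog op eps inv w g (TAdd t u)
  | hom_scale g (a : R) t : lpa_homog op eps inv w g t ->
      lpa_homog op eps inv w g (TScale a t)
  | hom_mul g h t u : lpa_homog op eps inv w g t -> lpa_homog op eps inv w h u ->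
      lpa_homog op eps inv w (op g h) (TMul t u).

Record nu_algebra (R : comPzRingType) (A : lmodType R) (mul : A -> A -> A) : Prop := {
  alg_mulA : forall x y z, mul x (mul y z) = mul (mul x y) z;
  alg_mulDl : forall x y z, mul (x + y) z = mul x z + mul y z;
  alg_mulDr : forall x y z, mul x (y + z) = mul x y + mul x z;
  alg_scale_mull : forall (a : R) x y, mul (a *: x) y = a *: mul x y;
  alg_scale_mulr : forall (a : R) x y, mul x (a *: y) = a *: mul x y }.

Record graded_algebra (R : comPzRingType) (A : lmodType R) (mul : A -> A -> A)
    (G : Type) (op : G -> G -> G) (Acomp : G -> A -> Prop) : Prop := {
  gr_zero : forall g, Acomp g 0;
  gr_add : forall g x y, Acomp g x -> Acomp g y -> Acomp g (x + y);
  gr_scale : forall g (a : R) x, Acomp g x -> Acomp g (a *: x);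
  gr_mul : forall g h x y, Acomp g x -> Acomp h y -> Acomp (op g h) (mul x y);
  gr_span : forall x : A, exists l : seq (G * A),
      (forall p, List.In p l -> Acomp p.1 p.2) /\ x = \sum_(p <- l) p.2;
  gr_indep : forall l : seq (G * A),
      List.NoDup (map fst l) -> (forall p, List.In p l -> Acomp p.1 p.2) ->
      \sum_(p <- l) p.2 = 0 -> forall p, List.In p l -> p.2 = 0 }.

Record lpa_hom (R : comPzRingType) (V Ed : Type) (rng src : Ed -> V)
    (A : lmodType R) (mul : A -> A -> A) (pi : lpa_term R V Ed -> A) : Prop := {
  hom_wd : forall t u, lpa_eq rng src t u -> pi t = pi u;
  hom_addP : forall t u, pi (TAdd t u) = pi t + pi u;
  hom_mulP : forall t u, pi (TMul t u) = mul (pi t) (pi u);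
  hom_scaleP : forall (a : R) t, pi (TScale a t) = a *: pi t }.

From Pilot Require Import Defs.
From HB Require Import structures.
From mathcomp Require Import all_boot all_order all_algebra boolp.
From Stdlib Require Import Setoid Morphisms.
Set Implicit Arguments. Unset Strict Implicit. Unset Printing Implicit Defensive.
Local Open Scope ring_scope.
Import GRing.Theory.

(* Every element of [L_R(E)] is a sum of monomials [r alpha beta^*].  Since the
   graded components of [A] are independent, it suffices to show that a
   homogeneous [x] with [pi x = 0] vanishes, and splitting by the source of the
   ghost parts we may assume [x = x v] for a vertex [v].  Induct on the total
   length of the ghost parts.  If there are none, [x = sum r_alpha alpha]; as
   [w] is positive, distinct paths of equal degree satisfy [alpha^* alpha' = 0],
   so [alpha^* x = r_alpha v] and [pi (r_alpha v) = 0] forces [r_alpha = 0].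
   Otherwise every [x e] has shorter ghost parts, hence vanishes.  At a regular
   [v] this gives [x = sum x e e^* = 0]; at an infinite emitter, an edge [e] that
   starts no ghost part of [x] reduces the question to the ghost-free part of
   [x], seen through [x e]. *)

Definition keyed (X K : Type) (key : X -> K) (k : K) : pred X :=
  fun x => `[< key x = k >].

Lemma In_filter (T : Type) (p : pred T) (l : seq T) x :
  List.In x (filter p l) <-> List.In x l /\ p x.
Proof.
elim: l => [|y l IH] /=; first by split=> // [[]].
case py: (p y) => /=; rewrite IH; intuition (subst; auto; try congruence).
Qed.

Lemma In_cat (T : Type) (l1 l2 : seq T) x :
  List.In x (l1 ++ l2) <-> List.In x l1 \/ List.In x l2.
Proof. by elim: l1 => [|y l IH] /=; [split; [right|case] | rewrite IH; tauto]. Qed.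

Lemma In_map (X Y : Type) (f : X -> Y) (l : seq X) y :
  List.In y (map f l) <-> exists2 x, List.In x l & y = f x.
Proof.
elim: l => [|x l IH] /=; first by split=> // [[]].
rewrite IH; split=> [[<-|[x' hx' ->]]|[x' [<-|hx'] ->]]; by [left | right; exists x'|
  exists x; [left|] | exists x'; [right|]].
Qed.

Lemma In_flatten (X Y : Type) (g : X -> seq Y) (l : seq X) y :
  List.In y (flatten (map g l)) -> exists2 x, List.In x l & List.In y (g x).
Proof.
elim: l => [|x l IH] //= /In_cat [h|/IH [x' h1 h2]]; first by exists x; [left|].
by exists x'; [right|].
Qed.

Lemma NoDup_restrict (T : Type) (l : seq T) (P : T -> Prop) :
  exists U, List.NoDup U /\ forall x, List.In x U <-> List.In x l /\ P x.
Proof.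
elim: l => [|y l [U [HU HUe]]].
  by exists [::]; split; [constructor|move=> x /=; tauto].
case: (EM (P y /\ ~ List.In y U)) => [[Py nUy]|h].
  exists (y :: U); split; first by constructor.
  by move=> x /=; rewrite HUe; split; [case=> [<-|]|case=> [[<-|] ?]]; tauto.
exists U; split=> // x; rewrite HUe /=; split; first tauto.
case=> [[<-|] Px]; last tauto.
by case: (EM (List.In y U)) => [|nUy]; [rewrite HUe; tauto | case: h].
Qed.

Section LeavittTerms.
Variables (V Ed : Type) (rng src : Ed -> V) (R : comPzRingType).
Local Notation term := (lpa_term R V Ed).
Local Notation eqv := (@lpa_eq R V Ed rng src).
Local Notation "x === y" := (eqv x y) (at level 70).
Implicit Types t s : term.
#[local] Hint Resolve Defs.eq_refl : core.

#[local] Instance lpa_eq_Equivalence : Equivalence eqv.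
Proof. split; [exact: Defs.eq_refl | exact: Defs.eq_sym | exact: Defs.eq_trans]. Qed.
#[local] Instance TAdd_Proper : Proper (eqv ==> eqv ==> eqv) (@TAdd R V Ed).
Proof. by move=> ? ? h ? ? h'; apply: eq_add. Qed.
#[local] Instance TMul_Proper : Proper (eqv ==> eqv ==> eqv) (@TMul R V Ed).
Proof. by move=> ? ? h ? ? h'; apply: eq_mul. Qed.
#[local] Instance TScale_Proper a : Proper (eqv ==> eqv) (@TScale R V Ed a).
Proof. by move=> ? ? h; apply: eq_scale. Qed.

Lemma eq_addr0 t : TAdd t TZero === t.
Proof. by rewrite eq_addC eq_add0. Qed.

Lemma eq_addNl t : TAdd (TScale (-1) t) t === TZero.
Proof. by rewrite eq_addC eq_addN. Qed.

Lemma eq_addACA t1 t2 t3 t4 :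
  TAdd (TAdd t1 t2) (TAdd t3 t4) === TAdd (TAdd t1 t3) (TAdd t2 t4).
Proof. by rewrite -!eq_addA; apply: eq_add => //; rewrite !eq_addA (eq_addC _ _ t2). Qed.

Lemma eq_sub_eq0 t s : TAdd t (TScale (-1) s) === TZero -> t === s.
Proof.
move=> h; transitivity (TAdd (TAdd t (TScale (-1) s)) s); last by rewrite h eq_add0.
by rewrite -eq_addA eq_addNl eq_addr0.
Qed.

Lemma eq_double_eq0 t : t === TAdd t t -> t === TZero.
Proof.
move=> h; transitivity (TAdd t (TAdd t (TScale (-1) t))); first by rewrite eq_addN eq_addr0.
by rewrite eq_addA -h eq_addN.
Qed.

Lemma eq_mul0l t : TMul TZero t === TZero.
Proof. by apply: eq_double_eq0; rewrite -eq_mulDl eq_add0. Qed.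

Lemma eq_mul0r t : TMul t TZero === TZero.
Proof. by apply: eq_double_eq0; rewrite -eq_mulDr eq_add0. Qed.

Lemma eq_scaler0 a : TScale a (@TZero R V Ed) === TZero.
Proof. by apply: eq_double_eq0; rewrite -eq_scaleDr eq_add0. Qed.

Lemma eq_scale0l t : TScale 0 t === TZero.
Proof. by apply: eq_double_eq0; rewrite -eq_scaleDl addr0. Qed.

Definition tsum (X : Type) (l : seq X) (f : X -> term) : term :=
  foldr (fun x acc => TAdd (f x) acc) TZero l.

Lemma eq_tsum (X : Type) (l : seq X) f g :
  (forall x, List.In x l -> f x === g x) -> tsum l f === tsum l g.
Proof.
elim: l => [|x l IH] h //=.
by rewrite (h x (or_introl erefl)) IH // => y hy; apply: h; right.
Qed.

Lemma tsum_eq0 (X : Type) (l : seq X) f :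
  (forall x, List.In x l -> f x === TZero) -> tsum l f === TZero.
Proof. by move=> /eq_tsum ->; elim: l => //= x l ->; apply: eq_add0. Qed.

Lemma tsum_cat (X : Type) (l1 l2 : seq X) f :
  tsum (l1 ++ l2) f === TAdd (tsum l1 f) (tsum l2 f).
Proof. by elim: l1 => [|x l IH] /=; rewrite ?eq_add0 // IH eq_addA. Qed.

Lemma tsum_add (X : Type) (l : seq X) f g :
  tsum l (fun x => TAdd (f x) (g x)) === TAdd (tsum l f) (tsum l g).
Proof. by elim: l => [|x l IH] /=; rewrite ?eq_add0 // IH eq_addACA. Qed.

Lemma tsum_filter (X : Type) (p : pred X) (l : seq X) f :
  tsum l f === TAdd (tsum (filter p l) f) (tsum (filter (predC p) l) f).
Proof.
elim: l => [|x l IH] /=; first by rewrite eq_add0.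
by case: (p x) => /=; rewrite IH !eq_addA // (eq_addC _ _ (f x)).
Qed.

Lemma tsum_mull (X : Type) (l : seq X) f t :
  TMul (tsum l f) t === tsum l (fun x => TMul (f x) t).
Proof. by elim: l => [|x l IH] /=; rewrite ?eq_mul0l // eq_mulDl IH. Qed.

Lemma tsum_mulr (X : Type) (l : seq X) f t :
  TMul t (tsum l f) === tsum l (fun x => TMul t (f x)).
Proof. by elim: l => [|x l IH] /=; rewrite ?eq_mul0r // eq_mulDr IH. Qed.

Lemma tsum_scale (X : Type) (l : seq X) f a :
  TScale a (tsum l f) === tsum l (fun x => TScale a (f x)).
Proof. by elim: l => [|x l IH] /=; rewrite ?eq_scaler0 // eq_scaleDr IH. Qed.

Lemma tsum_flatten (X Y : Type) (l : seq X) (g : X -> seq Y) f :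
  tsum (flatten (map g l)) f === tsum l (fun x => tsum (g x) f).
Proof. by elim: l => [|x l IH] //=; rewrite tsum_cat IH. Qed.

Lemma tsum_map (X Y : Type) (g : X -> Y) (l : seq X) f :
  tsum (map g l) f = tsum l (fun x => f (g x)).
Proof. by elim: l => //= x l ->. Qed.

Lemma tsum_only (X : Type) (l : seq X) f k :
  List.NoDup l -> List.In k l -> (forall x, List.In x l -> x <> k -> f x === TZero) ->
  tsum l f === f k.
Proof.
elim: l => [|x l IH] //= hnd hk h; inversion hnd; subst.
case: hk => [exk|hk].
  subst k; rewrite tsum_eq0 ?eq_addr0 // => y hy.
  by apply: h; [right | move=> yx; apply: H1; rewrite -yx].
rewrite IH //; last by move=> y hy; apply: h; right.
by rewrite h ?eq_add0 //; [left | move=> xk; apply: H1; rewrite xk].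
Qed.

Lemma tsum_partition (X K : Type) (l : seq X) (key : X -> K) (U : seq K) f :
  List.NoDup U -> (forall x, List.In x l -> List.In (key x) U) ->
  tsum l f === tsum U (fun k => tsum (filter (keyed key k) l) f).
Proof.
elim: U l => [|k U IH] l hnd hl /=.
  by case: l hl => [|x l] // /(_ x (or_introl erefl)).
inversion hnd; subst.
rewrite (tsum_filter (keyed key k)); apply: eq_add => //.
rewrite IH //.
  apply: eq_tsum => k' hk'; rewrite -filter_predI (@eq_filter _ _ (keyed key k')) // => x /=.
  rewrite /keyed; case: (asboolP (key x = k')) => //= ekx.
  by apply/asboolPn => ek; apply: H1; rewrite -ek ekx.
move=> x /In_filter [hx]; rewrite /= /keyed; case: asboolP => //= ne _.
by case: (hl x hx) => // ?; subst.
Qed.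

(* [epath a u] is the path [a_1 ... a_n] followed by its range vertex [u];
   [gpath b u] is the ghost path [(b_1 ... b_n u)^* = u b_n^* ... b_1^*]. *)
Definition epath (a : seq Ed) (u : V) : term := foldr (fun e t => TMul (tE e) t) (tV u) a.
Definition gpath (b : seq Ed) (u : V) : term := foldr (fun e t => TMul t (tS e)) (tV u) b.
Arguments epath : simpl never.
Arguments gpath : simpl never.

Lemma epath_nil u : epath [::] u = tV u. Proof. by []. Qed.
Lemma gpath_nil u : gpath [::] u = tV u. Proof. by []. Qed.
Lemma epath_cons e a u : epath (e :: a) u = TMul (tE e) (epath a u). Proof. by []. Qed.
Lemma gpath_cons e b u : gpath (e :: b) u = TMul (gpath b u) (tS e). Proof. by []. Qed.

Definition psrc (a : seq Ed) (u : V) : V := if a is e :: _ then src e else u.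

Fixpoint is_path (a : seq Ed) (u : V) : Prop :=
  if a is e :: a' then rng e = psrc a' u /\ is_path a' u else True.

Lemma mul_psrc_epath a u : TMul (tV (psrc a u)) (epath a u) === epath a u.
Proof. by case: a => [|e a] /=; rewrite ?eq_vv // epath_cons eq_mulA eq_se. Qed.

Lemma mul_gpath_psrc b u : TMul (gpath b u) (tV (psrc b u)) === gpath b u.
Proof. by case: b => [|e b] /=; rewrite ?eq_vv // gpath_cons -eq_mulA eq_ss. Qed.

Lemma mul_epath_end a u : TMul (epath a u) (tV u) === epath a u.
Proof. by elim: a => [|e a IH]; rewrite ?eq_vv // epath_cons -eq_mulA IH. Qed.

Lemma mul_gpath_epath_same a u : is_path a u -> TMul (gpath a u) (epath a u) === tV u.
Proof.
elim: a => [|e a IH] /=; first by rewrite eq_vv.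
case=> he ha; rewrite gpath_cons epath_cons -eq_mulA (eq_mulA _ _ (tS e)) eq_CK1 he.
by rewrite mul_psrc_epath IH.
Qed.

Lemma mul_epath_cat a c u u' :
  psrc c u' = u -> TMul (epath a u) (epath c u') === epath (a ++ c) u'.
Proof.
move=> hc; elim: a => [|e a IH] /=; first by rewrite -hc mul_psrc_epath.
by rewrite !epath_cons -eq_mulA IH.
Qed.

Lemma mul_gpath_cat b d u u' :
  psrc b u = u' -> TMul (gpath b u) (gpath d u') === gpath (d ++ b) u.
Proof.
move=> hb; elim: d => [|e d IH] /=; first by rewrite -hb mul_gpath_psrc.
by rewrite !gpath_cons eq_mulA IH.
Qed.

Lemma is_path_cat a c u u' :
  is_path a u -> is_path c u' -> psrc c u' = u -> is_path (a ++ c) u'.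
Proof.
move=> ha hc hs; elim: a ha => [|e a IH] //= [he ha]; split; last exact: IH.
by case: a he {IH ha} => [|f a] //= ->; rewrite -hs.
Qed.

(* A monomial [c . alpha beta^*], with [alpha] and [beta] paths ending at [mend m]. *)
Record mon := Mon { mcoef : R; mend : V; mreal : seq Ed; mghost : seq Ed }.

Definition mterm (m : mon) : term :=
  TScale (mcoef m) (TMul (epath (mreal m) (mend m)) (gpath (mghost m) (mend m))).
Definition mvalid (m : mon) : Prop := is_path (mreal m) (mend m) /\ is_path (mghost m) (mend m).
Definition nf (x : seq mon) : term := tsum x mterm.
Arguments nf : simpl never.
Definition all_valid (x : seq mon) : Prop := forall m, List.In m x -> mvalid m.

Lemma nf_cons m x : nf (m :: x) = TAdd (mterm m) (nf x). Proof. by []. Qed.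
Lemma nf1 m : nf [:: m] === mterm m. Proof. exact: eq_addr0. Qed.

Lemma nf_cat x y : nf (x ++ y) === TAdd (nf x) (nf y). Proof. exact: tsum_cat. Qed.

(* In [(c alpha beta^* ) (gamma delta^* )] the middle factor [beta^* gamma] cancels edge by edge. *)
Fixpoint mul_paths (c : R) (u : V) (a b : seq Ed) (u' : V) (c' d : seq Ed) : seq mon :=
  match b, c' with
  | [::], [::] => if `[< u = u' >] then [:: Mon c u a d] else [::]
  | [::], c1 :: _ => if `[< u = src c1 >] then [:: Mon c u' (a ++ c') d] else [::]
  | b1 :: _, [::] => if `[< src b1 = u' >] then [:: Mon c u a (d ++ b)] else [::]
  | b1 :: b', c1 :: c'' => if `[< b1 = c1 >] then mul_paths c u a b' u' c'' d else [::]
  end.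

Lemma nf_mul_paths c u a b u' c' d : is_path b u -> is_path c' u' ->
  TScale c (TMul (TMul (epath a u) (TMul (gpath b u) (epath c' u'))) (gpath d u'))
  === nf (mul_paths c u a b u' c' d).
Proof.
elim: b c' => [|b1 b IH] [|c1 c'] hb hc /=; case: asboolP => [h|ne];
  rewrite ?nf1 /mterm /= ?epath_nil ?gpath_nil.
- by rewrite -h eq_vv mul_epath_end.
- by rewrite eq_vw // eq_mul0r eq_mul0l eq_scaler0.
- by rewrite [in TMul (tV u) _]h (mul_psrc_epath (c1 :: c')) mul_epath_cat.
- rewrite -(mul_psrc_epath (c1 :: c') u') (eq_mulA _ _ (tV u)) eq_vw //.
  by rewrite eq_mul0l eq_mul0r eq_mul0l eq_scaler0.
- by rewrite -h (mul_gpath_psrc (b1 :: b)) -eq_mulA mul_gpath_cat.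
- rewrite -(mul_gpath_psrc (b1 :: b) u) -(eq_mulA _ _ (gpath (b1 :: b) u)) eq_vw //.
  by rewrite eq_mul0r eq_mul0r eq_mul0l eq_scaler0.
- subst c1; case: hb => _ hb; case: hc => hc1 hc.
  rewrite gpath_cons epath_cons -(eq_mulA _ _ (gpath b u)) (eq_mulA _ _ (tS b1)) eq_CK1 hc1.
  by rewrite mul_psrc_epath IH.
- rewrite gpath_cons epath_cons -(eq_mulA _ _ (gpath b u)) (eq_mulA _ _ (tS b1)) eq_CK1' //.
  by rewrite eq_mul0l eq_mul0r eq_mul0r eq_mul0l eq_scaler0.
Qed.

Lemma mul_paths_valid c u a b u' c' d : is_path a u -> is_path b u -> is_path c' u' ->
  is_path d u' -> all_valid (mul_paths c u a b u' c' d).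
Proof.
move=> ha; elim: b c' => [|b1 b IH] [|c1 c'] hb hc hd /=;
  case: asboolP => h; try by move=> m [].
- by move=> m [<-|] //; split; rewrite //= h.
- by move=> m [<-|] //; split=> //=; apply: (is_path_cat ha hc); rewrite h.
- by move=> m [<-|] //; split=> //=; apply: (is_path_cat hd hb).
- by subst c1; apply: IH; [case: hb | case: hc | ].
Qed.

Definition mul_mon (m1 m2 : mon) : seq mon :=
  mul_paths (mcoef m1 * mcoef m2) (mend m1) (mreal m1) (mghost m1)
            (mend m2) (mreal m2) (mghost m2).

Lemma mterm_mul m1 m2 : mvalid m1 -> mvalid m2 ->
  TMul (mterm m1) (mterm m2) === nf (mul_mon m1 m2).
Proof.
move: m1 m2 => [r u a b] [s u2 c d] [ha hb] [hc hd].
rewrite /mul_mon /mterm /= -nf_mul_paths // eq_scale_mull eq_scale_mulr eq_scaleA.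
by apply: eq_scale; rewrite -!eq_mulA (eq_mulA _ _ (gpath b u)).
Qed.

Definition nf_prod (x y : seq mon) : seq mon :=
  flatten (map (fun m1 => flatten (map (mul_mon m1) y)) x).

Lemma nf_mul x y : all_valid x -> all_valid y -> TMul (nf x) (nf y) === nf (nf_prod x y).
Proof.
move=> hx hy; rewrite /nf /nf_prod tsum_flatten tsum_mull.
apply: eq_tsum => m1 h1; rewrite tsum_flatten tsum_mulr.
by apply: eq_tsum => m2 h2; apply: mterm_mul; [apply: hx | apply: hy].
Qed.

Lemma nf_prod_valid x y : all_valid x -> all_valid y -> all_valid (nf_prod x y).
Proof.
move=> hx hy m hm; case: (In_flatten hm) => m1 h1 {}hm; case: (In_flatten hm) => m2 h2 {}hm.
case: (hx _ h1) => ha hb; case: (hy _ h2) => hc hd.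
exact: (mul_paths_valid ha hb hc hd hm).
Qed.

Definition nf_scale (c : R) (x : seq mon) : seq mon :=
  map (fun m => Mon (c * mcoef m) (mend m) (mreal m) (mghost m)) x.

Lemma nf_scaleE c x : TScale c (nf x) === nf (nf_scale c x).
Proof. by rewrite /nf /nf_scale tsum_map tsum_scale; apply: eq_tsum => m _; apply: eq_scaleA. Qed.

Lemma nf_scale_valid c x : all_valid x -> all_valid (nf_scale c x).
Proof. by move=> hx m /In_map [m' h ->]; apply: (hx m' h). Qed.

Lemma nf_exists t : exists2 x, all_valid x & t === nf x.
Proof.
elim: t => [[v|e|e]| |t [x hx ex] u [y hy ey]|t [x hx ex] u [y hy ey]|c t [x hx ex]].
- exists [:: Mon 1 v [::] [::]]; first by move=> m [<-|].
  by rewrite nf1 /mterm /= eq_scale1 eq_vv.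
- exists [:: Mon 1 (rng e) [:: e] [::]]; first by move=> m [<-|].
  by rewrite nf1 /mterm /= eq_scale1 -eq_mulA eq_vv eq_er.
- exists [:: Mon 1 (rng e) [::] [:: e]]; first by move=> m [<-|].
  by rewrite nf1 /mterm /= eq_scale1 eq_mulA eq_vv eq_rs.
- by exists [::].
- exists (x ++ y); first by move=> m /In_cat [/hx|/hy].
  by rewrite nf_cat ex ey.
- by exists (nf_prod x y); [apply: nf_prod_valid | rewrite ex ey nf_mul].
- by exists (nf_scale c x); [apply: nf_scale_valid | rewrite ex nf_scaleE].
Qed.

Lemma In_keyed (X K : Type) (key : X -> K) k (l : seq X) x :
  List.In x (filter (keyed key k) l) <-> List.In x l /\ key x = k.
Proof. by rewrite In_filter /keyed; split=> -[? /asboolP]. Qed.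

Lemma all_valid_filter (p : pred mon) x : all_valid x -> all_valid (filter p x).
Proof. by move=> hx m /In_filter [/hx]. Qed.

Lemma nf_partition (K : Type) (key : mon -> K) x :
  exists U : seq K, [/\ List.NoDup U,
    forall k, List.In k U -> exists2 m, List.In m x & key m = k &
    nf x === tsum U (fun k => nf (filter (keyed key k) x))].
Proof.
case: (NoDup_restrict (map key x) (fun _ => True)) => U [hnd hU].
exists U; split=> //; first by move=> k /hU [/In_map [m hm ->] _]; exists m.
by apply: tsum_partition => // m hm; apply/hU; split=> //; apply/In_map; exists m.
Qed.

Lemma nf_eq0_partition (K : Type) (key : mon -> K) x :
  (forall m, List.In m x -> nf (filter (keyed key (key m)) x) === TZero) -> nf x === TZero.
Proof.
move=> h; case: (nf_partition key x) => U [_ hU ->].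
by apply: tsum_eq0 => k /hU [m hm <-]; apply: h.
Qed.

Definition msrc (m : mon) : V := psrc (mghost m) (mend m).

Lemma mterm_mul_vertex m v :
  TMul (mterm m) (tV v) === if `[< msrc m = v >] then mterm m else TZero.
Proof.
case: m => c u a b; rewrite /mterm /msrc /= eq_scale_mull -eq_mulA.
case: asboolP => [<-|ne]; first by rewrite mul_gpath_psrc.
rewrite -(mul_gpath_psrc b u) -(eq_mulA _ _ (gpath b u)) eq_vw //.
by rewrite !eq_mul0r eq_scaler0.
Qed.

Lemma nf_mul_vertex x v : TMul (nf x) (tV v) === nf (filter (keyed msrc v) x).
Proof.
elim: x => [|m x IH] /=; first exact: eq_mul0l.
rewrite nf_cons eq_mulDl IH mterm_mul_vertex /keyed.
by case: asboolP => _; rewrite ?nf_cons ?eq_add0.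
Qed.

Lemma nf_mul_vertex_id x v :
  (forall m, List.In m x -> msrc m = v) -> TMul (nf x) (tV v) === nf x.
Proof.
move=> hx; rewrite nf_mul_vertex; suff -> : filter (keyed msrc v) x = x by [].
elim: x hx => [|m x IH] hx //=; rewrite /keyed asboolT ?IH //; last by apply: hx; left.
by move=> m' hm'; apply: hx; right.
Qed.

Definition mon_edge (m : mon) (e : Ed) : seq mon :=
  match mghost m with
  | [::] => if `[< mend m = src e >]
            then [:: Mon (mcoef m) (rng e) (mreal m ++ [:: e]) [::]] else [::]
  | b1 :: b' => if `[< b1 = e >] then [:: Mon (mcoef m) (mend m) (mreal m) b'] else [::]
  end.

Lemma mterm_mul_edge m e : mvalid m -> TMul (mterm m) (tE e) === nf (mon_edge m e).
Proof.
case: m => c u a [|b1 b] [ha hb]; rewrite /mon_edge /mterm /=.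
  rewrite gpath_nil eq_scale_mull -eq_mulA; case: asboolP => [hu|ne].
    rewrite nf1 /mterm /= gpath_nil mul_epath_end hu eq_se -mul_epath_cat //.
    by rewrite epath_cons epath_nil eq_er.
  rewrite -(eq_se _ rng src e) (eq_mulA _ _ (tV u)) eq_vw //.
  by rewrite eq_mul0l !eq_mul0r eq_scaler0.
rewrite eq_scale_mull gpath_cons -!eq_mulA; case: asboolP => [<-|ne].
  by rewrite eq_CK1 nf1 /mterm /= (proj1 hb) mul_gpath_psrc.
by rewrite eq_CK1' // !eq_mul0r eq_scaler0.
Qed.

Lemma mon_edge_valid m e : mvalid m -> all_valid (mon_edge m e).
Proof.
case: m => c u a [|b1 b] [ha hb]; rewrite /mon_edge /=; case: asboolP => // h m' [<-|] //.
  by split=> //=; apply: (is_path_cat ha).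
by split=> //=; case: hb.
Qed.

Definition nf_edge (x : seq mon) (e : Ed) : seq mon := flatten (map (mon_edge^~ e) x).

Lemma nf_mul_edge x e : all_valid x -> TMul (nf x) (tE e) === nf (nf_edge x e).
Proof.
move=> hx; rewrite /nf /nf_edge tsum_flatten tsum_mull.
by apply: eq_tsum => m hm; apply: mterm_mul_edge; apply: hx.
Qed.

Lemma nf_edge_valid x e : all_valid x -> all_valid (nf_edge x e).
Proof.
by move=> hx m hm; case: (In_flatten hm) => m1 h1 h2; apply: (mon_edge_valid (hx _ h1) h2).
Qed.

Definition ghost_size (x : seq mon) : nat := sumn (map (fun m => size (mghost m)) x).

Lemma ghost_size_cons m x : ghost_size (m :: x) = (size (mghost m) + ghost_size x)%N.
Proof. by []. Qed.

Lemma ghost_size_cat x y : ghost_size (x ++ y) = (ghost_size x + ghost_size y)%N.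
Proof. by rewrite /ghost_size map_cat sumn_cat. Qed.

Lemma ghost_size_filter (p : pred mon) x : (ghost_size (filter p x) <= ghost_size x)%N.
Proof.
elim: x => [|m x IH] //=; rewrite ghost_size_cons.
by case: (p m); rewrite ?ghost_size_cons ?leq_add2l // (leq_trans IH) ?leq_addl.
Qed.

Lemma ghost_size_mon_edge m e : (ghost_size (mon_edge m e) <= (size (mghost m)).-1)%N.
Proof.
by case: m => c u a [|b1 b]; rewrite /mon_edge /=; case: asboolP; rewrite /ghost_size //= addn0.
Qed.

Lemma ghost_size_nf_edge x e :
  (exists2 m, List.In m x & mghost m <> [::]) -> (ghost_size (nf_edge x e) < ghost_size x)%N.
Proof.
have le_me m : (ghost_size (mon_edge m e) <= size (mghost m))%N.
  exact: leq_trans (ghost_size_mon_edge m e) (leq_pred _).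
elim: x => [|m x IH] [m0 //= hm0 hb].
rewrite /nf_edge /= ghost_size_cat ghost_size_cons -/(nf_edge x e).
case: hm0 => [em|hm0]; last by rewrite -addnS leq_add // IH //; exists m0.
have le_xe : (ghost_size (nf_edge x e) <= ghost_size x)%N.
  by elim: (x) => //= m' y IHy; rewrite /nf_edge /= ghost_size_cat leq_add.
rewrite -addSn leq_add //; subst m0; apply: leq_ltn_trans (ghost_size_mon_edge m e) _.
by case: (mghost m) hb.
Qed.

Definition regular (v : V) : Prop :=
  exists l : seq Ed, [/\ forall e, src e = v <-> List.In e l, List.NoDup l & l <> [::]].

Lemma nonregular_edge v b1 (F : seq Ed) : ~ regular v -> src b1 = v ->
  exists2 e, src e = v & ~ List.In e F.
Proof.
move=> hnr hb1; apply: contrapT => hno; apply: hnr.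
have hF e : src e = v -> List.In e F.
  by move=> he; apply: contrapT => hn; apply: hno; exists e.
case: (NoDup_restrict F (fun e => src e = v)) => U [hnd hU].
exists U; split=> //; first by move=> e; rewrite hU; split=> [he|[]//]; split=> //; apply: hF.
have : List.In b1 U by rewrite hU; split=> //; apply: hF.
by move=> + U0; rewrite U0.
Qed.

(* [T] times the Cuntz-Krieger defect [v - sum_(f in U) f f^* ], when [T = T v]. *)
Definition ck_defect (U : seq Ed) (T : term) : term :=
  TAdd T (TScale (-1) (tsum U (fun f => TMul (TMul T (tE f)) (tS f)))).

#[local] Instance ck_defect_Proper U : Proper (eqv ==> eqv) (ck_defect U).
Proof.
move=> T T' h; rewrite /ck_defect; apply: eq_add => //.
by apply: eq_scale; apply: eq_tsum => f _; rewrite h.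
Qed.

Lemma ck_defect_add U T1 T2 :
  ck_defect U (TAdd T1 T2) === TAdd (ck_defect U T1) (ck_defect U T2).
Proof.
rewrite /ck_defect -eq_addACA -eq_scaleDr -tsum_add.
by apply: eq_add => //; apply: eq_scale; apply: eq_tsum => f _; rewrite !eq_mulDl.
Qed.

Lemma ck_defect0 U : ck_defect U TZero === TZero.
Proof. by rewrite /ck_defect tsum_eq0 ?eq_scaler0 ?eq_add0 // => f _; rewrite !eq_mul0l. Qed.

Lemma ck_defect_nf U x : ck_defect U (nf x) === tsum x (fun m => ck_defect U (mterm m)).
Proof. by elim: x => [|m x IH] /=; rewrite ?ck_defect0 // nf_cons ck_defect_add IH. Qed.

Lemma ck_defect_id U T : (forall f, TMul T (tE f) === TZero) -> ck_defect U T === T.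
Proof.
by move=> hT; rewrite /ck_defect tsum_eq0 ?eq_scaler0 ?eq_addr0 // => f _; rewrite hT eq_mul0l.
Qed.

Lemma ck_defect_ghost U m b1 b : mvalid m -> mghost m = b1 :: b -> List.NoDup U ->
  List.In b1 U -> ck_defect U (mterm m) === TZero.
Proof.
move=> hv hb hnd hin; rewrite /ck_defect (tsum_only hnd hin).
  rewrite mterm_mul_edge // /mon_edge hb asboolT // nf1 /mterm /=.
  by rewrite eq_scale_mull -eq_mulA -gpath_cons -hb eq_addN.
move=> f hf ne; rewrite mterm_mul_edge // /mon_edge hb asboolF ?eq_mul0l //.
by move=> e; apply: ne.
Qed.

Lemma ck_defect_mul_edge U T e : ~ List.In e U ->
  TMul (ck_defect U T) (tE e) === TMul T (tE e).
Proof.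
move=> heU; rewrite /ck_defect eq_mulDl eq_scale_mull tsum_mull.
rewrite tsum_eq0 ?eq_scaler0 ?eq_addr0 // => f hf.
by rewrite -eq_mulA eq_CK1' ?eq_mul0r // => ef; apply: heU; rewrite -ef.
Qed.

Section Grading.
Variables (G : Type) (op : G -> G -> G) (eps : G) (inv : G -> G) (le : G -> G -> Prop).
Hypothesis HG : ordered_group op eps inv le.
Variable w : Ed -> G.
Hypothesis Hw : forall e, positive_elt eps le (w e).
Notation homog := (@lpa_homog R V Ed G op eps inv w).

Definition wdeg (a : seq Ed) : G := foldr (fun e g => op (w e) g) eps a.
Definition gdeg (b : seq Ed) : G := foldr (fun e g => op g (inv (w e))) eps b.
Definition mdeg (m : mon) : G := op (wdeg (mreal m)) (gdeg (mghost m)).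
Definition all_deg (x : seq mon) (g : G) : Prop := forall m, List.In m x -> mdeg m = g.

Lemma op_inj x : injective (op x).
Proof.
move=> a b h; rewrite -(og_id_l HG a) -(og_id_l HG b) -(og_inv_l HG x).
by rewrite -!(og_assoc HG) h.
Qed.

Lemma wdeg_ge a : le eps (wdeg a).
Proof.
elim: a => [|e a IH] /=; first exact: (og_refl HG).
apply: (og_trans HG (proj1 (Hw e))).
by rewrite -{1}(og_id_r HG (w e)); apply: (og_compat_l HG).
Qed.

Lemma wdeg_cons_neq e a : wdeg (e :: a) <> eps.
Proof.
move=> h; apply: (proj2 (Hw e)); apply: (og_antisym HG); last exact: (proj1 (Hw e)).
by rewrite -h -{1}(og_id_r HG (w e)); apply: (og_compat_l HG); apply: wdeg_ge.
Qed.

Lemma wdeg_rcons a e : wdeg (a ++ [:: e]) = op (wdeg a) (w e).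
Proof.
elim: a => [|f a IH] /=; first by rewrite (og_id_r HG) (og_id_l HG).
by rewrite IH (og_assoc HG).
Qed.

(* As [w] is positive, neither path is a proper prefix of the other, so after
   their common prefix they continue with edges [e <> f], and [e^* f = 0]. *)
Lemma mul_gpath_epath_neq a c u : is_path a u -> is_path c u -> wdeg a = wdeg c -> a <> c ->
  TMul (gpath a u) (epath c u) === TZero.
Proof.
elim: a c => [|e a IH] [|f c] //= ha hc hw hne.
- by case: (@wdeg_cons_neq f c).
- by case: (@wdeg_cons_neq e a).
rewrite gpath_cons epath_cons -(eq_mulA _ _ (gpath a u)) (eq_mulA _ _ (tS e)).
case: (EM (e = f)) => [ef|ne]; last by rewrite eq_CK1' // eq_mul0l eq_mul0r.
subst f; rewrite eq_CK1 (proj1 hc) mul_psrc_epath; apply: IH.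
- exact: (proj2 ha).
- exact: (proj2 hc).
- exact: op_inj hw.
- by move=> ac; apply: hne; rewrite ac.
Qed.

Lemma epath_homog a u : homog (wdeg a) (epath a u).
Proof.
by elim: a => [|e a IH]; [apply: hom_v | rewrite epath_cons; apply: hom_mul IH; apply: hom_e].
Qed.

Lemma gpath_homog b u : homog (gdeg b) (gpath b u).
Proof.
by elim: b => [|e b IH]; [apply: hom_v | rewrite gpath_cons; apply: hom_mul IH _; apply: hom_s].
Qed.

Lemma nf_homog x g : all_deg x g -> homog g (nf x).
Proof.
elim: x => [|m x IH] h; first exact: hom_zero.
rewrite nf_cons; apply: hom_add; last by apply: IH => m' hm'; apply: h; right.
rewrite -(h m (or_introl erefl)).
by apply: hom_scale; apply: hom_mul; [apply: epath_homog | apply: gpath_homog].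
Qed.

Lemma nf_edge_deg x e g : all_deg x g -> all_deg (nf_edge x e) (op g (w e)).
Proof.
move=> hx m hm; case: (In_flatten hm) => [[c u a [|b1 b]]] /hx; rewrite /mon_edge /mdeg /= => <-.
  by case: asboolP => // _ [<-|] //=; rewrite wdeg_rcons !(og_id_r HG).
case: asboolP => // <- [<-|] //=.
by rewrite -!(og_assoc HG) (og_inv_l HG) (og_id_r HG).
Qed.

Lemma all_deg_keyed x g : all_deg (filter (keyed mdeg g) x) g.
Proof. by move=> m /In_keyed []. Qed.

Lemma all_deg_filter (p : pred mon) x g : all_deg x g -> all_deg (filter p x) g.
Proof. by move=> hx m /In_filter [/hx]. Qed.

Definition real_mon (v : V) (g : G) (m : mon) : Prop :=
  [/\ mvalid m, mghost m = [::], mend m = v & wdeg (mreal m) = g].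

Lemma gpath_mul_real_nf a v g y : is_path a v -> wdeg a = g ->
  (forall m, List.In m y -> real_mon v g m) ->
  TMul (gpath a v) (nf y) === TScale (\sum_(m <- y | keyed mreal a m) mcoef m) (tV v).
Proof.
move=> ha hg; elim: y => [|m y IH] hy; first by rewrite big_nil eq_scale0l eq_mul0r.
rewrite big_cons nf_cons eq_mulDr IH; last by move=> m' hm'; apply: hy; right.
case: (hy m (or_introl erefl)) => [[ham _] hbm hvm hwm].
rewrite /mterm hbm hvm gpath_nil mul_epath_end eq_scale_mulr.
rewrite hvm in ham; rewrite /keyed; case: asboolP => [<-|ne].
  by rewrite mul_gpath_epath_same // -eq_scaleDl.
by rewrite mul_gpath_epath_neq ?eq_scaler0 ?eq_add0 ?hwm // => e; apply: ne.
Qed.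

Lemma nf_same_real a v y :
  (forall m, List.In m y -> [/\ mreal m = a, mghost m = [::] & mend m = v]) ->
  nf y === TScale (\sum_(m <- y) mcoef m) (epath a v).
Proof.
elim: y => [|m y IH] h; first by rewrite big_nil eq_scale0l.
rewrite big_cons nf_cons IH; last by move=> m' hm'; apply: h; right.
case: (h m (or_introl erefl)) => ha hb hv.
by rewrite /mterm ha hb hv gpath_nil mul_epath_end -eq_scaleDl.
Qed.

Section Homomorphism.
Variables (A : lmodType R) (mul : A -> A -> A).
Hypothesis HA : nu_algebra mul.
Variable Acomp : G -> A -> Prop.
Hypothesis HAgr : graded_algebra mul op Acomp.
Variable pi : term -> A.
Hypothesis Hpi : lpa_hom rng src mul pi.
Hypothesis Hpigr : forall g t, homog g t -> Acomp g (pi t).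
Hypothesis Hnz : forall v (a : R), a != 0 -> pi (TScale a (tV v)) <> 0.

Lemma pi_eqv t s : t === s -> pi t = pi s.
Proof. exact: (hom_wd Hpi). Qed.

Lemma pi0 : pi TZero = 0.
Proof.
by apply: (addrI (pi TZero)); rewrite addr0 -(hom_addP Hpi); apply: pi_eqv; rewrite eq_add0.
Qed.

Lemma pi_mull0 t s : pi t = 0 -> pi (TMul t s) = 0.
Proof.
move=> h; rewrite (hom_mulP Hpi) h.
by apply: (addrI (mul 0 (pi s))); rewrite -(alg_mulDl HA) !addr0.
Qed.

Lemma pi_mulr0 t s : pi s = 0 -> pi (TMul t s) = 0.
Proof.
move=> h; rewrite (hom_mulP Hpi) h.
by apply: (addrI (mul (pi t) 0)); rewrite -(alg_mulDr HA) !addr0.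
Qed.

Lemma pi_tsum (X : Type) (l : seq X) f : pi (tsum l f) = \sum_(i <- l) pi (f i).
Proof. by elim: l => [|x l IH] /=; rewrite ?big_nil ?pi0 // big_cons (hom_addP Hpi) IH. Qed.

(* Multiplying by [gpath a v] on the left and [q'] on the right turns the
   [a]-part of [nf x q] into [c z], which [pi] can kill only if [c = 0]. *)
Lemma real_nf_eq0 x v g (q q' : term) (z : V) :
  (forall m, List.In m x -> real_mon v g m) ->
  TMul (tV v) q === q -> TMul q' q === tV z -> pi (TMul (nf x) q) = 0 -> nf x === TZero.
Proof.
move=> hx hq hq' hpi; apply: (nf_eq0_partition (key := mreal)) => m hm.
case: (hx m hm) => [[ha _] _ hv hg]; rewrite hv in ha.
set c := \sum_(m' <- x | keyed mreal (mreal m) m') mcoef m'.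
have c0 : c = 0.
  case: (eqVneq c 0) => // hc; case: (Hnz (v := z) hc).
  have -> : pi (TScale c (tV z)) = pi (TMul q' (TMul (gpath (mreal m) v) (TMul (nf x) q))).
    apply: pi_eqv; rewrite (eq_mulA _ _ (gpath _ v)) (gpath_mul_real_nf ha hg hx).
    by rewrite eq_scale_mull hq eq_scale_mulr hq'.
  by apply: pi_mulr0; apply: pi_mulr0.
rewrite (@nf_same_real (mreal m) v); first by rewrite big_filter -/c c0 eq_scale0l.
by move=> m' /In_keyed [/hx [_ hb hv' _] ->].
Qed.

Definition kernel_below (n : nat) : Prop := forall y g, (ghost_size y < n)%N ->
  all_valid y -> all_deg y g -> pi (nf y) = 0 -> nf y === TZero.

Section SingleSource.
Variables (x : seq mon) (v : V) (g : G).
Hypotheses (hx : all_valid x) (hsrc : forall m, List.In m x -> msrc m = v).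
Hypotheses (hdeg : all_deg x g) (hpi : pi (nf x) = 0).

Lemma real_mon_ghost_free m : List.In m x -> mghost m = [::] -> real_mon v g m.
Proof.
move=> hm hb; move: (hsrc hm) (hdeg hm); rewrite /msrc /mdeg hb /= (og_id_r HG) => hv hg.
by split=> //; apply: hx.
Qed.

Lemma ghost_free_eq0 : (forall m, List.In m x -> mghost m = [::]) -> nf x === TZero.
Proof.
move=> hb; apply: (@real_nf_eq0 _ v g (tV v) (tV v) v); rewrite ?eq_vv ?pi_mull0 //.
by move=> m hm; apply: real_mon_ghost_free (hb m hm).
Qed.

Lemma nf_mul_edge_eq0 : kernel_below (ghost_size x) ->
  (exists2 m, List.In m x & mghost m <> [::]) -> forall f, TMul (nf x) (tE f) === TZero.
Proof.
move=> IH hex f; rewrite nf_mul_edge //; apply: (IH _ (op g (w f))).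
- exact: ghost_size_nf_edge.
- exact: nf_edge_valid.
- exact: nf_edge_deg.
- by rewrite -(pi_eqv (nf_mul_edge f hx)); apply: pi_mull0.
Qed.

Lemma regular_eq0 : regular v -> (forall f, TMul (nf x) (tE f) === TZero) -> nf x === TZero.
Proof.
case=> l [hl hnd hne] hF; rewrite -(nf_mul_vertex_id hsrc) (eq_CK2 R rng hl hnd hne).
change (TMul (nf x) (tsum l (fun e => TMul (tE e) (tS e))) === TZero).
by rewrite tsum_mulr; apply: tsum_eq0 => e _; rewrite eq_mulA hF eq_mul0l.
Qed.

(* At an infinite emitter [v], choose an edge [e] from [v] that is not the first
   ghost edge of any monomial: [x (v - sum_(f in U) f f^* )] keeps only the
   ghost-free part [y], and [y e] still lies in the kernel. *)
Lemma nonregular_eq0 : ~ regular v -> (exists2 m, List.In m x & mghost m <> [::]) ->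
  (forall f, TMul (nf x) (tE f) === TZero) -> nf x === TZero.
Proof.
move=> hnr [m0 hm0]; case hb : (mghost m0) => [//|b1 b] _ hF.
have hsb1 : src b1 = v by rewrite -(hsrc hm0) /msrc hb.
case: (NoDup_restrict (map (fun m => head b1 (mghost m)) x) (fun _ => True)) => U [hnd hU].
case: (nonregular_edge U hnr hsb1) => e hse heU.
set y := filter (keyed mghost [::]) x.
have hxy : nf x === ck_defect U (nf y).
  rewrite -(ck_defect_id U hF) ck_defect_nf (tsum_filter (keyed mghost [::])) -ck_defect_nf.
  rewrite (tsum_eq0 (l := filter _ x)) ?eq_addr0 // => m /In_filter [hm].
  rewrite /= /keyed; case: asboolP => //=; case hbm : (mghost m) => [//|c1 c] _ _.
  apply: (ck_defect_ghost (hx hm) hbm hnd); apply/hU; split=> //.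
  by apply/In_map; exists m; rewrite ?hbm.
have hye : pi (TMul (nf y) (tE e)) = 0.
  rewrite -(pi_eqv (ck_defect_mul_edge (nf y) heU)).
  by apply: pi_mull0; rewrite -(pi_eqv hxy).
have hy0 : nf y === TZero.
  apply: (@real_nf_eq0 _ v g (tE e) (tS e) (rng e)); rewrite ?eq_CK1 //.
  - by move=> m /In_keyed [hm hbm]; apply: real_mon_ghost_free.
  - by rewrite -hse eq_se.
by rewrite hxy hy0 ck_defect0.
Qed.

Lemma single_source_eq0 : kernel_below (ghost_size x) -> nf x === TZero.
Proof.
move=> IH; case: (EM (exists2 m, List.In m x & mghost m <> [::])) => [hex|hnone].
  have hF := nf_mul_edge_eq0 IH hex.
  by case: (EM (regular v)) => hreg; [apply: regular_eq0 | apply: nonregular_eq0].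
by apply: ghost_free_eq0 => m hm; apply: contrapT => hb; apply: hnone; exists m.
Qed.

End SingleSource.

Lemma kernel_below_all n : kernel_below n.
Proof.
elim: n => [|n IHn] y g // hsz hy hd hpi.
apply: (nf_eq0_partition (key := msrc)) => m hm; apply: (@single_source_eq0 _ (msrc m) g).
- exact: all_valid_filter.
- by move=> m' /In_keyed [].
- exact: all_deg_filter.
- by rewrite -(pi_eqv (nf_mul_vertex y (msrc m))); apply: pi_mull0.
- move=> z g' hz; apply: IHn.
  apply: leq_trans hz _; rewrite -ltnS.
  exact: leq_ltn_trans (ghost_size_filter _ _) hsz.
Qed.

Lemma pi_eq0 t : pi t = 0 -> t === TZero.
Proof.
move=> hpi; case: (nf_exists t) => x hx ht; rewrite (pi_eqv ht) in hpi; rewrite ht.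
case: (nf_partition mdeg x) => U [hnd _ hxU].
pose F g := (g, pi (nf (filter (keyed mdeg g) x))).
have hcomp g : List.In g U -> pi (nf (filter (keyed mdeg g) x)) = 0.
  move=> hg; apply: (@gr_indep _ _ _ _ _ _ HAgr (map F U) _ _ _ (F g)).
  - by have -> : map fst (map F U) = U by elim: (U) => //= g' U' ->.
  - by move=> p /In_map [g' _ ->]; apply: Hpigr; apply: nf_homog; apply: all_deg_keyed.
  - by rewrite big_map -pi_tsum -hpi; apply: pi_eqv; rewrite hxU.
  - by apply/In_map; exists g.
rewrite hxU; apply: tsum_eq0 => g hg.
apply: (@kernel_below_all (ghost_size _).+1 _ g) => //.
- exact: all_valid_filter.
- exact: all_deg_keyed.
- exact: hcomp.
Qed.

End Homomorphism.

End Grading.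
End LeavittTerms.

Theorem mainTheorem14
  (V Ed : Type) (rng src : Ed -> V)
  (G : Type) (op : G -> G -> G) (eps : G) (inv : G -> G) (le : G -> G -> Prop)
  (HG : ordered_group op eps inv le)
  (w : Ed -> G) (Hw : forall e, positive_elt eps le (w e))
  (R : comPzRingType)
  (A : lmodType R) (mul : A -> A -> A) (HA : nu_algebra mul)
  (Acomp : G -> A -> Prop) (HAgr : graded_algebra mul op Acomp)
  (pi : lpa_term R V Ed -> A)
  (Hpi : lpa_hom rng src mul pi)
  (Hpigr : forall g t, lpa_homog op eps inv w g t -> Acomp g (pi t))
  (Hnz : forall v (a : R), a != 0 -> pi (TScale a (tV v)) <> 0) :
  forall t u, pi t = pi u -> lpa_eq rng src t u.
Proof.
move=> t u htu; apply: eq_sub_eq0; apply: (pi_eq0 HG Hw HA HAgr Hpi Hpigr Hnz).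
by rewrite (hom_addP Hpi) (hom_scaleP Hpi) htu scaleN1r subrr.
Qed.
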